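(* Let $E$ be an imaginary quadratic field, $\iota_0\in\mathrm{Emb}(\mathfrak{o}_E,\mathcal{O})$, and define $B=\{g\in G: g^{-1}\cdot\iota_0\in\mathrm{Emb}(\mathfrak{o}_E,\mathcal{O})\}$, $B_p=\{g\in G_p: g^{-1}\cdot(\iota_0\otimes\mathrm{id}_{\mathbb{Q}_p})\in\mathrm{Emb}(\mathfrak{o}_{E,p},\mathcal{O}_p)\}$ and $B_\mathbb{A}=G_\infty\prod_p B_p\subset G_\mathbb{A}$. Then the map $B\ni g\mapsto g^{-1}\cdot\iota_0$ induces a bijection $T\backslash B/\Gamma\cong\mathrm{Emb}(\mathfrak{o}_E,\mathcal{O})/\!\sim$, and the diagonal embedding $B\to B_\mathbb{A}$ induces a bijection $T\backslash B/\Gamma\cong T\backslash B_\mathbb{A}/K$.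
   Context: $D$ is a definite quaternion algebra over $\mathbb{Q}$, $\mathcal{O}$ an Eichler order; $G=D^\times/\mathbb{Q}^\times$ (as algebraic group $\underline G(R)=(D\otimes R)^\times/R^\times$), $G_p$, $G_\mathbb{A}$ the local and adelic points. $K_p$ is the image of $\mathcal{O}_p^\times$ in $G_p$, $K_\infty=G_\infty$, $K=\prod_v K_v$; standing assumption: class number one, $G_\mathbb{A}=GK$. $\Gamma=G\cap K$ (image of $\mathcal{O}^\times$). $G$ acts on embeddings $E\hookrightarrow D$ by $(g\cdot\iota)(x)=g\iota(x)g^{-1}$ (similarly $G_p$ on embeddings $E\otimes\mathbb{Q}_p\to D\otimes\mathbb{Q}_p$). $\mathrm{Emb}(\mathfrak{o}_E,\mathcal{O})$ is the set of embeddings $\iota:E\hookrightarrow D$ with $\iota(E)\cap\mathcal{O}\cong\mathfrak{o}_E$; analogously $\mathrm{Emb}(\mathfrak{o}_{E,p},\mathcal{O}_p)$ locally, with $\mathfrak{o}_{E,p}=\mathfrak{o}_E\otimes\mathbb{Z}_p$. $\iota_1\sim\iota_2$ iff $\gamma\cdot\iota_1=\iota_2$ for some $\gamma\in\Gamma$. $T$ is the torus with $T(R)=(\iota_0(E)\otimes R)^\times/R^\times$, $T=T(\mathbb{Q})\subset G$. *)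

From HB Require Import structures.
From mathcomp Require Import all_boot all_order all_algebra.
From mathcomp Require Import reals.
Set Implicit Arguments. Unset Strict Implicit. Unset Printing Implicit Defensive.
Import Order.TTheory GRing.Theory Num.Theory.
Local Open Scope ring_scope.

(* Quaternion algebras (a,b)_F = F<1,i,j,k>, i^2=a, j^2=b, ij=-ji=k,   *)
Record quat (F : Type) := Quat { q0 : F; q1 : F; q2 : F; q3 : F }.

Definition qadd (F : fieldType) (x y : quat F) : quat F :=
  Quat (q0 x + q0 y) (q1 x + q1 y) (q2 x + q2 y) (q3 x + q3 y).
Definition qscale (F : fieldType) (c : F) (x : quat F) : quat F :=
  Quat (c * q0 x) (c * q1 x) (c * q2 x) (c * q3 x).
Definition qzero (F : fieldType) : quat F := Quat 0 0 0 0.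
Definition qone (F : fieldType) : quat F := Quat 1 0 0 0.
Definition qmap (F K : fieldType) (f : F -> K) (x : quat F) : quat K :=
  Quat (f (q0 x)) (f (q1 x)) (f (q2 x)) (f (q3 x)).

Definition qmul (F : fieldType) (a b : rat) (x y : quat F) : quat F :=
  let A := ratr a : F in let B := ratr b : F in
  Quat (q0 x * q0 y + A * q1 x * q1 y + B * q2 x * q2 y - A * B * q3 x * q3 y)
       (q0 x * q1 y + q1 x * q0 y - B * q2 x * q3 y + B * q3 x * q2 y)
       (q0 x * q2 y + q2 x * q0 y + A * q1 x * q3 y - A * q3 x * q1 y)
       (q0 x * q3 y + q3 x * q0 y + q1 x * q2 y - q2 x * q1 y).

Definition qconj (F : fieldType) (x : quat F) : quat F :=
  Quat (q0 x) (- q1 x) (- q2 x) (- q3 x).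
Definition qnrd (F : fieldType) (a b : rat) (x : quat F) : F :=
  let A := ratr a : F in let B := ratr b : F in
  q0 x ^+ 2 - A * q1 x ^+ 2 - B * q2 x ^+ 2 + A * B * q3 x ^+ 2.
Definition qinv (F : fieldType) (a b : rat) (x : quat F) : quat F :=
  qscale (qnrd a b x)^-1 (qconj x).

(* G(F) = (D (x) F)^x / F^x : elements are represented by nonzero
   quaternions; two representatives give the same element of G(F) iff
   they differ by a nonzero scalar. *)
Definition projeq (F : fieldType) (x y : quat F) : Prop :=
  exists c : F, c != 0 /\ y = qscale c x.

Definition i0 : 'I_4 := @Ordinal 4 0 isT.
Definition i1 : 'I_4 := @Ordinal 4 1 isT.
Definition i2 : 'I_4 := @Ordinal 4 2 isT.
Definition i3 : 'I_4 := @Ordinal 4 3 isT.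

Definition qlin (F : fieldType) (c : 'I_4 -> F) (e : 'I_4 -> quat F) : quat F :=
  qadd (qadd (qscale (c i0) (e i0)) (qscale (c i1) (e i1)))
       (qadd (qscale (c i2) (e i2)) (qscale (c i3) (e i3))).

Definition lat (F : fieldType) (S : F -> Prop) (e : 'I_4 -> quat F) (x : quat F) : Prop :=
  exists c : 'I_4 -> F, (forall i, S (c i)) /\ x = qlin c e.

Definition isZ (q : rat) : Prop := exists z : int, q = z%:~R.

Definition qbasis (e : 'I_4 -> quat rat) : Prop :=
  forall c : 'I_4 -> rat, qlin c e = qzero rat -> forall i, c i = 0.

Definition is_order (a b : rat) (P : quat rat -> Prop) : Prop :=
  (exists e, qbasis e /\ forall x, P x <-> lat isZ e x) /\
  P (qone rat) /\ (forall x y, P x -> P y -> P (qmul a b x y)).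

Definition is_maximal_order (a b : rat) (P : quat rat -> Prop) : Prop :=
  is_order a b P /\
  forall P', is_order a b P' -> (forall x, P x -> P' x) -> forall x, P' x -> P x.

Definition is_eichler (a b : rat) (e : 'I_4 -> quat rat) : Prop :=
  qbasis e /\
  exists O1 O2, is_maximal_order a b O1 /\ is_maximal_order a b O2 /\
     forall x, lat isZ e x <-> (O1 x /\ O2 x).

(* Axiomatic characterisation of (Q_p, |.|_p): a complete field with a *)
(* nonarchimedean absolute value restricting to the p-adic absolute    *)
(* value on Q, in which Q is dense.  This determines Q_p up to unique  *)
(* isometric isomorphism.                                              *)
Definition padic_abs_rat (R : realType) (p : nat) (q : rat) : R :=
  (p%:R : R) ^ ((logn p (absz (denq q)))%:Z - (logn p (absz (numq q)))%:Z).

Definition is_Qp (R : realType) (p : nat) (F : fieldType) (abs : F -> R) : Prop :=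
  (forall x, 0 <= abs x) /\
      (forall x, abs x = 0 <-> x = 0) /\
      (forall x y, abs (x * y) = abs x * abs y) /\
      (forall x y, abs (x + y) <= Num.max (abs x) (abs y)) /\
      (forall q : rat, q != 0 -> abs (ratr q) = padic_abs_rat R p q) /\
      (forall (x : F) (eps : R), 0 < eps -> exists q : rat, abs (x - ratr q) < eps) /\
      (forall u : nat -> F,
          (forall eps : R, 0 < eps -> exists N, forall m n, (N <= m)%N -> (N <= n)%N ->
                abs (u m - u n) < eps) ->
          exists l, forall eps : R, 0 < eps -> exists N, forall n, (N <= n)%N ->
                abs (u n - l) < eps).

(* The imaginary quadratic field E = Q(sqrt d) (d < 0 squarefree),     *)
(* E (x) F = F + F sqrt d, represented as pairs (u,v) = u + v sqrt d.  *)
Definition imag_quad_disc (d : int) : Prop :=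
  d < 0 /\ forall m : nat, (m * m %| absz d)%N -> m = 1%N.

Definition eadd (F : fieldType) (x y : F * F) : F * F := (x.1 + y.1, x.2 + y.2).
Definition escale (F : fieldType) (c : F) (x : F * F) : F * F := (c * x.1, c * x.2).
Definition emul (F : fieldType) (d : int) (x y : F * F) : F * F :=
  (x.1 * y.1 + d%:~R * x.2 * y.2, x.1 * y.2 + x.2 * y.1).

(* omega: Z-basis element of o_E = Z + Z omega *)
Definition omega (F : fieldType) (d : int) : F * F :=
  if (d %% 4)%Z == 1 then (ratr (1 / 2%:R), ratr (1 / 2%:R)) else (0, 1).

Definition oE (F : fieldType) (d : int) (S : F -> Prop) (x : F * F) : Prop :=
  exists m n : F, S m /\ S n /\ x = eadd (m, 0) (escale n (omega F d)).

Definition is_emb (F : fieldType) (a b : rat) (d : int) (iota : F * F -> quat F) : Prop :=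
  (forall x y, iota (eadd x y) = qadd (iota x) (iota y)) /\
  (forall c x, iota (escale c x) = qscale c (iota x)) /\
  (forall x y, iota (emul d x y) = qmul a b (iota x) (iota y)) /\
  iota (1, 0) = qone F /\
  injective iota.

Definition opt_emb (F : fieldType) (a b : rat) (d : int) (S : F -> Prop)
    (e : 'I_4 -> quat F) (iota : F * F -> quat F) : Prop :=
  is_emb a b d iota /\ forall x, lat S e (iota x) <-> oE d S x.

Definition gact (F : fieldType) (a b : rat) (g : quat F) (iota : F * F -> quat F)
  : F * F -> quat F :=
  fun x => qmul a b (qmul a b g (iota x)) (qinv a b g).

Definition emb_ext (F : fieldType) (iota0 : rat * rat -> quat rat) : F * F -> quat F :=
  fun x => qadd (qscale x.1 (qone F)) (qscale x.2 (qmap ratr (iota0 (0, 1)))).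

(* image in G(F) of the units of the lattice-order spanned by e over S:
   g represents such an element iff some scalar multiple c g is a unit *)
Definition inK (F : fieldType) (a b : rat) (S : F -> Prop) (e : 'I_4 -> quat F)
    (g : quat F) : Prop :=
  exists c : F, c != 0 /\ qscale c g <> qzero F /\
    lat S e (qscale c g) /\ lat S e (qinv a b (qscale c g)).

Definition Zp_int (R : realType) (F : fieldType) (abs : F -> R) : F -> Prop :=
  fun x => abs x <= 1.

(* adelic points: infinite component and p-components (for p prime) *)
Definition adele (R : realType) (Qp : nat -> fieldType) : Type :=
  (quat R * (forall p : nat, quat (Qp p)))%type.

Definition diag (R : realType) (Qp : nat -> fieldType) (g : quat rat) : adele R Qp :=
  (qmap ratr g, fun p => qmap ratr g).

(* Since D is definite, every nonzero quaternion is invertible and the centraliser of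
   iota0(E) is iota0(E).  Skolem-Noether conjugates every embedding to iota0, and two
   elements of B give Gamma-equivalent embeddings iff they differ by T on the left and by
   Gamma on the right: this is the first bijection.
   For the second, optimality of an embedding iota is a condition on the coordinates of
   iota(1) and iota(omega) in a Z-basis of O, and this condition holds over Z iff it holds
   over every Z_p (to go down, approximate p-adic coefficients by rationals and clear
   denominators prime to p).  Hence the diagonal image of B lies in B_A, and class number
   one, G_A = G K, gives surjectivity.  Injectivity reduces to: an element of D^x lying in
   Q_p^x K_p for every p lies in Q^x Gamma, as one sees by dividing it by the content of
   its coordinates. *)

From HB Require Import structures.
From mathcomp Require Import all_boot all_order all_algebra.
From mathcomp Require Import boolp reals.
From mathcomp Require Import ring lra.
Import Order.TTheory GRing.Theory Num.Theory.
Set Implicit Arguments. Unset Strict Implicit. Unset Printing Implicit Defensive.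
Local Open Scope ring_scope.

(* The library's ring-morphism instance for [ratr] only covers numFieldType; the p-adic
   fields here are bare fieldTypes. *)
Section RatrPchar0.
Variables (F : fieldType) (F0 : [pchar F] =i pred0).

Lemma intr_pchar0_eq0 (z : int) : (z%:~R == 0 :> F) = (z == 0).
Proof.
have /pcharf0P natF0 := F0.
by case: z => n; rewrite ?NegzE ?mulrNz ?oppr_eq0 -?pmulrn natF0.
Qed.

Lemma ratr_frac (x : rat) (n d : int) :
  d != 0 -> x * d%:~R = n%:~R -> ratr x = n%:~R / d%:~R :> F.
Proof.
move=> d0 xd; have den0 : (denq x)%:~R != 0 :> F by rewrite intr_pchar0_eq0 denq_neq0.
have /intr_inj cross : (numq x * d)%:~R = (n * denq x)%:~R :> rat.
  by rewrite !intrM numqE -xd mulrAC.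
have /(congr1 (fun z : int => z%:~R : F)) := cross; rewrite !intrM => crossF.
have d0F : d%:~R != 0 :> F by rewrite intr_pchar0_eq0.
rewrite /ratr; apply: (canRL (mulfK d0F)).
by rewrite mulrAC crossF mulfK.
Qed.

Fact ratr_pchar0_zmod : zmod_morphism (@ratr F).
Proof.
move=> x y; rewrite [ratr x](ratr_frac (d := denq x) (n := numq x)) ?denq_neq0 ?numqE //.
rewrite [ratr y](ratr_frac (d := denq y) (n := numq y)) ?denq_neq0 ?numqE //.
rewrite (ratr_frac (d := denq x * denq y) (n := numq x * denq y - numq y * denq x)).
- by rewrite !(intrM, intrB); field; rewrite !intr_pchar0_eq0 !denq_neq0.
- by rewrite mulf_neq0 ?denq_neq0.
- by rewrite !(intrM, intrB) !numqE; ring.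
Qed.

Fact ratr_pchar0_monoid : monoid_morphism (@ratr F).
Proof.
split=> [|x y]; first by rewrite /ratr divr1.
rewrite [ratr x](ratr_frac (d := denq x) (n := numq x)) ?denq_neq0 ?numqE //.
rewrite [ratr y](ratr_frac (d := denq y) (n := numq y)) ?denq_neq0 ?numqE //.
rewrite (ratr_frac (d := denq x * denq y) (n := numq x * numq y)).
- by rewrite !intrM; field; rewrite !intr_pchar0_eq0 !denq_neq0.
- by rewrite mulf_neq0 ?denq_neq0.
- by rewrite !intrM !numqE; ring.
Qed.

Definition ratr_pchar0 : {rmorphism rat -> F} :=
  HB.pack (@ratr F) (GRing.isZmodMorphism.Build _ _ _ ratr_pchar0_zmod)
                    (GRing.isMonoidMorphism.Build _ _ _ ratr_pchar0_monoid).

Lemma ratr_pchar0E x : ratr x = ratr_pchar0 x.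
Proof. by []. Qed.
End RatrPchar0.

Section QuatAlgebra.
Variables (F : fieldType) (a b : rat).
Local Notation mul := (qmul a b).
Local Notation inv := (qinv a b).
Local Notation nrd := (qnrd a b).
Local Notation one := (qone F).
Local Notation zero := (qzero F).

Lemma quat_ext (x y : quat F) :
  q0 x = q0 y -> q1 x = q1 y -> q2 x = q2 y -> q3 x = q3 y -> x = y.
Proof. by case: x; case: y => /= ? ? ? ? ? ? ? ? -> -> -> ->. Qed.

Ltac quat_ring := repeat match goal with x : quat F |- _ => case: x => ? ? ? ? end;
  apply: quat_ext; rewrite /qmul /qadd /qscale /qconj /qone /qzero /=; ring.

Lemma qmulA (x y z : quat F) : mul (mul x y) z = mul x (mul y z).
Proof. quat_ring. Qed.
Lemma qmul1q (x : quat F) : mul one x = x.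
Proof. quat_ring. Qed.
Lemma qmulq1 (x : quat F) : mul x one = x.
Proof. quat_ring. Qed.
Lemma qmulDl (x y z : quat F) : mul (qadd x y) z = qadd (mul x z) (mul y z).
Proof. quat_ring. Qed.
Lemma qmulDr (x y z : quat F) : mul z (qadd x y) = qadd (mul z x) (mul z y).
Proof. quat_ring. Qed.
Lemma qmulZl c (x y : quat F) : mul (qscale c x) y = qscale c (mul x y).
Proof. quat_ring. Qed.
Lemma qmulZr c (x y : quat F) : mul x (qscale c y) = qscale c (mul x y).
Proof. quat_ring. Qed.
Lemma qscaleA c c' (x : quat F) : qscale c (qscale c' x) = qscale (c * c') x.
Proof. quat_ring. Qed.
Lemma qscale1 (x : quat F) : qscale 1 x = x.
Proof. quat_ring. Qed.
Lemma qscale0 (x : quat F) : qscale 0 x = zero.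
Proof. quat_ring. Qed.
Lemma qscaler0 c : qscale c zero = zero.
Proof. quat_ring. Qed.
Lemma qaddC (x y : quat F) : qadd x y = qadd y x.
Proof. quat_ring. Qed.
Lemma qmul_conj (x : quat F) : mul x (qconj x) = qscale (nrd x) one.
Proof. rewrite /qnrd; quat_ring. Qed.
Lemma qconj_mul (x : quat F) : mul (qconj x) x = qscale (nrd x) one.
Proof. rewrite /qnrd; quat_ring. Qed.
Lemma qconjM (x y : quat F) : qconj (mul x y) = mul (qconj y) (qconj x).
Proof. quat_ring. Qed.
Lemma qconjZ c (x : quat F) : qconj (qscale c x) = qscale c (qconj x).
Proof. quat_ring. Qed.
Lemma qconjK (x : quat F) : qconj (qconj x) = x.
Proof. quat_ring. Qed.

Lemma qmul_sqr (x : quat F) : mul x x = qadd (qscale (2 * q0 x) x) (qscale (- nrd x) one).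
Proof. rewrite /qnrd; quat_ring. Qed.

Lemma qnrdM (x y : quat F) : nrd (mul x y) = nrd x * nrd y.
Proof. by case: x; case: y => * /=; rewrite /qnrd /=; ring. Qed.
Lemma qnrdZ c (x : quat F) : nrd (qscale c x) = c ^+ 2 * nrd x.
Proof. by case: x => * /=; rewrite /qnrd /=; ring. Qed.
Lemma qnrd_conj (x : quat F) : nrd (qconj x) = nrd x.
Proof. by case: x => * /=; rewrite /qnrd /=; ring. Qed.
Lemma qnrd1 : nrd one = 1.
Proof. rewrite /qnrd /=; ring. Qed.
Lemma qnrd0 : nrd zero = 0.
Proof. rewrite /qnrd /=; ring. Qed.

Lemma qmulqV (x : quat F) : nrd x != 0 -> mul x (inv x) = one.
Proof. by move=> x0; rewrite /qinv qmulZr qmul_conj qscaleA mulVf // qscale1. Qed.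
Lemma qmulVq (x : quat F) : nrd x != 0 -> mul (inv x) x = one.
Proof. by move=> x0; rewrite /qinv qmulZl qconj_mul qscaleA mulVf // qscale1. Qed.
Lemma qinvM (x y : quat F) : inv (mul x y) = mul (inv y) (inv x).
Proof. by rewrite /qinv qmulZl qmulZr qscaleA qconjM qnrdM invfM mulrC. Qed.
Lemma qinv1 : inv one = one.
Proof. by rewrite /qinv qnrd1 invr1 qscale1 /qconj /qone /= oppr0. Qed.
Lemma qnrdV (x : quat F) : nrd (inv x) = (nrd x)^-1.
Proof.
rewrite /qinv qnrdZ qnrd_conj.
have [->|x0] := eqVneq (nrd x) 0; first by rewrite invr0 mulr0.
by rewrite expr2 -mulrA mulVf // mulr1.
Qed.
Lemma qinvZ c (x : quat F) : inv (qscale c x) = qscale c^-1 (inv x).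
Proof.
rewrite /qinv qnrdZ qconjZ !qscaleA; congr qscale.
have [->|c0] := eqVneq c 0; first by rewrite invr0 !mul0r mulr0.
have [->|x0] := eqVneq (nrd x) 0; first by rewrite mulr0 invr0 mul0r mulr0.
by field; rewrite x0 c0.
Qed.
Lemma qinvK (x : quat F) : nrd x != 0 -> inv (inv x) = x.
Proof.
by move=> x0; rewrite {2}/qinv qinvZ /qinv qconjK qnrd_conj invrK qscaleA mulfV // qscale1.
Qed.

Lemma qnrdV_neq0 (x : quat F) : nrd x != 0 -> nrd (inv x) != 0.
Proof. by rewrite qnrdV invr_eq0. Qed.
Lemma qnrdM_neq0 (x y : quat F) : nrd x != 0 -> nrd y != 0 -> nrd (mul x y) != 0.
Proof. by move=> x0 y0; rewrite qnrdM mulf_neq0. Qed.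
Lemma qnrd_neq0_nz (x : quat F) : nrd x != 0 -> x <> zero.
Proof. by move=> x0 x_0; move: x0; rewrite x_0 qnrd0 eqxx. Qed.
Lemma qscaleK c (x : quat F) : c != 0 -> qscale c^-1 (qscale c x) = x.
Proof. by move=> c0; rewrite qscaleA mulVf // qscale1. Qed.
Lemma qscale_nz c (x : quat F) : c != 0 -> x <> zero -> qscale c x <> zero.
Proof. by move=> c0 x0 cx0; apply: x0; rewrite -(qscaleK x c0) cx0 qscaler0. Qed.

Lemma gactZ c g (i : F * F -> quat F) x :
  c != 0 -> gact a b (qscale c g) i x = gact a b g i x.
Proof. by move=> c0; rewrite /gact qinvZ !qmulZl qmulZr qscaleA mulfV // qscale1. Qed.
Lemma gactM g h (i : F * F -> quat F) x : gact a b (mul g h) i x = gact a b g (gact a b h i) x.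
Proof. by rewrite /gact qinvM !qmulA. Qed.
Lemma gact1 (i : F * F -> quat F) x : gact a b one i x = i x.
Proof. by rewrite /gact qinv1 qmul1q qmulq1. Qed.
Lemma gactK g (i : F * F -> quat F) x :
  nrd g != 0 -> gact a b (inv g) (gact a b g i) x = i x.
Proof. by move=> g0; rewrite -gactM qmulVq // gact1. Qed.
Lemma gactVK g (i : F * F -> quat F) x :
  nrd g != 0 -> gact a b g (gact a b (inv g) i) x = i x.
Proof. by move=> g0; rewrite -gactM qmulqV // gact1. Qed.

Lemma is_emb_gact d g (i : F * F -> quat F) :
  nrd g != 0 -> is_emb a b d i -> is_emb a b d (gact a b g i).
Proof.
move=> g0 [iD [iZ [iM [i1 i_inj]]]]; split; [|split; [|split; [|split]]].
- by move=> x y; rewrite /gact iD qmulDr qmulDl.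
- by move=> c x; rewrite /gact iZ qmulZr qmulZl.
- by move=> x y; rewrite /gact iM !qmulA -(qmulA (inv g) g) qmulVq // qmul1q.
- by rewrite /gact i1 qmulq1 qmulqV.
- move=> x y gxy; apply: i_inj.
  by rewrite -(gactK i x g0) -(gactK i y g0) /gact /gact in gxy *; rewrite gxy.
Qed.

Lemma is_emb_gact_nrd d g (i : F * F -> quat F) : is_emb a b d (gact a b g i) -> nrd g != 0.
Proof.
move=> [_ [_ [_ [gi1 _]]]]; apply/negP => /eqP g0.
move: gi1; rewrite /gact /qinv g0 invr0 qscale0.
move/(congr1 (@q0 _)); rewrite /qmul /qzero /= !mulr0 !subr0 !addr0 => /eqP.
by rewrite eq_sym oner_eq0.
Qed.

Lemma is_emb_decomp d (i : F * F -> quat F) : is_emb a b d i ->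
  forall x, i x = qadd (qscale x.1 one) (qscale x.2 (i (0, 1))).
Proof.
move=> [iD [iZ [_ [i1 _]]]] [x1 x2].
by rewrite -i1 -!iZ -iD /eadd /escale /=; congr i; congr pair; ring.
Qed.
End QuatAlgebra.

Lemma ratrQ (x : rat) : ratr x = x.
Proof. by rewrite /ratr divq_num_den. Qed.

Lemma qmap_ratrQ (x : quat rat) : qmap ratr x = x.
Proof. by case: x => *; rewrite /qmap /= !ratrQ. Qed.

Section QuatMap.
Variables (F : fieldType) (F0 : [pchar F] =i pred0) (a b : rat).
Local Notation mul := (qmul a b).
Local Notation inv := (qinv a b).
Local Notation nrd := (qnrd a b).
Local Notation qm := (@qmap rat F ratr).
Let ratrE := ratr_pchar0E F0.

Ltac map_ring := repeat match goal with x : quat _ |- _ => case: x => ? ? ? ? end;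
  apply: quat_ext; rewrite /qmap /qmul /qadd /qscale /qconj /qone /qzero /= ?ratrQ !ratrE
    ?(rmorphD, rmorphB, rmorphM, rmorphN, rmorph0, rmorph1) //; ring.

Lemma qmap_mul (x y : quat rat) : qm (mul x y) = mul (qm x) (qm y).
Proof. map_ring. Qed.
Lemma qmap_add (x y : quat rat) : qm (qadd x y) = qadd (qm x) (qm y).
Proof. map_ring. Qed.
Lemma qmap_scale c (x : quat rat) : qm (qscale c x) = qscale (ratr c) (qm x).
Proof. map_ring. Qed.
Lemma qmap_conj (x : quat rat) : qm (qconj x) = qconj (qm x).
Proof. map_ring. Qed.
Lemma qmap_one : qm (qone rat) = qone F.
Proof. map_ring. Qed.
Lemma qmap_zero : qm (qzero rat) = qzero F.
Proof. map_ring. Qed.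
Lemma qmap_nrd (x : quat rat) : ratr (nrd x) = nrd (qm x).
Proof.
case: x => *; rewrite /qmap /qnrd /= ?ratrQ !ratrE.
by rewrite !(rmorphD, rmorphB, rmorphN, rmorphM, rmorphXn).
Qed.
Lemma qmap_inv (x : quat rat) : qm (inv x) = inv (qm x).
Proof. by rewrite /qinv qmap_scale qmap_conj ratrE fmorphV -ratrE qmap_nrd. Qed.

Lemma ratr_pchar0_eq0 (x : rat) : (ratr x == 0 :> F) = (x == 0).
Proof. by rewrite ratrE fmorph_eq0. Qed.
Lemma qmap_inj : injective qm.
Proof.
case=> ? ? ? ?; case=> ? ? ? ? [] /=; rewrite !ratrE.
by move=> /fmorph_inj -> /fmorph_inj -> /fmorph_inj -> /fmorph_inj ->.
Qed.
Lemma qmap_nz (x : quat rat) : x <> qzero rat -> qm x <> qzero F.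
Proof. by move=> x0 mx0; apply: x0; apply: qmap_inj; rewrite mx0 qmap_zero. Qed.
Lemma qmap_nrd_neq0 (x : quat rat) : nrd x != 0 -> nrd (qm x) != 0.
Proof. by rewrite -qmap_nrd ratr_pchar0_eq0. Qed.

Lemma qmap_qlin (c : 'I_4 -> rat) e :
  qm (qlin c e) = qlin (fun i => ratr (c i)) (fun i => qm (e i)).
Proof. by rewrite /qlin !qmap_add !qmap_scale. Qed.

Lemma emb_ext_map d (io : rat * rat -> quat rat) x : is_emb a b d io ->
  emb_ext io (ratr x.1, ratr x.2) = qm (io x).
Proof.
by move=> io_emb; rewrite /emb_ext (is_emb_decomp io_emb x) qmap_add !qmap_scale qmap_one.
Qed.

Lemma gact_emb_ext_map d (io : rat * rat -> quat rat) g x : is_emb a b d io ->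
  gact a b (inv (qm g)) (emb_ext io) (ratr x.1, ratr x.2) = qm (gact a b (inv g) io x).
Proof. by move=> io_emb; rewrite /gact (emb_ext_map _ io_emb) -!qmap_inv -!qmap_mul. Qed.

Lemma omega_map d : omega F d = (ratr (omega rat d).1, ratr (omega rat d).2).
Proof. by rewrite /omega; case: ifP => _ /=; rewrite ?ratrQ // !ratrE ?rmorph0 ?rmorph1. Qed.
End QuatMap.

Definition qcoord (F : fieldType) (x : quat F) (k : 'I_4) : F :=
  match nat_of_ord k with 0 => q0 x | 1 => q1 x | 2 => q2 x | _ => q3 x end%N.

Lemma ord4_ind (P : 'I_4 -> Prop) : P i0 -> P i1 -> P i2 -> P i3 -> forall k, P k.
Proof.
move=> P0 P1 P2 P3 [[|[|[|[|k]]]] lt_k4] //.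
- by rewrite (_ : Ordinal lt_k4 = i0) //; apply: val_inj.
- by rewrite (_ : Ordinal lt_k4 = i1) //; apply: val_inj.
- by rewrite (_ : Ordinal lt_k4 = i2) //; apply: val_inj.
- by rewrite (_ : Ordinal lt_k4 = i3) //; apply: val_inj.
Qed.

Lemma sum_ord4 (V : nmodType) (g : 'I_4 -> V) : \sum_i g i = g i0 + g i1 + g i2 + g i3.
Proof.
rewrite !big_ord_recr big_ord0 /= add0r.
by congr (_ + _ + _ + _); apply: congr1; apply: val_inj.
Qed.

Section QCoord.
Variable F : fieldType.

Lemma qcoord_inj (x y : quat F) : qcoord x =1 qcoord y -> x = y.
Proof. by move=> xy; apply: quat_ext; [apply: xy i0 | apply: xy i1 | apply: xy i2 | apply: xy i3]. Qed.
Lemma qcoord_qlin (c : 'I_4 -> F) e k : qcoord (qlin c e) k = \sum_i c i * qcoord (e i) k.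
Proof. by rewrite sum_ord4; elim/ord4_ind: k; rewrite /qcoord /qlin /= addrA. Qed.
Lemma qcoord_add (x y : quat F) k : qcoord (qadd x y) k = qcoord x k + qcoord y k.
Proof. by elim/ord4_ind: k. Qed.
Lemma qcoord_scale c (x : quat F) k : qcoord (qscale c x) k = c * qcoord x k.
Proof. by elim/ord4_ind: k. Qed.
Lemma qcoord_map (f : rat -> F) (x : quat rat) k : qcoord (qmap f x) k = f (qcoord x k).
Proof. by elim/ord4_ind: k. Qed.
Lemma qcoord0 k : qcoord (qzero F) k = 0.
Proof. by elim/ord4_ind: k. Qed.
End QCoord.

Lemma qbasis_dual (e : 'I_4 -> quat rat) : qbasis e -> exists N : 'I_4 -> 'I_4 -> rat,
  (forall k j, \sum_i N k i * qcoord (e i) j = (k == j)%:R) /\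
  (forall i j, \sum_k qcoord (e i) k * N k j = (i == j)%:R).
Proof.
move=> e_free; pose M := \matrix_(i < 4, k < 4) qcoord (e i) k.
have M_unit : M \in unitmx.
  rewrite -row_free_unit -kermx_eq0; apply/eqP/row_matrixP => i; rewrite row0.
  set r := row i (kermx M).
  have rM0 : r *m M = 0 by rewrite /r -row_mul mulmx_ker row0.
  apply/rowP => j; rewrite mxE.
  suff /e_free r0 : qlin (fun l => r 0 l) e = qzero rat.
    by have := r0 j; rewrite /r mxE => ->; rewrite mxE.
  apply: qcoord_inj => k; rewrite qcoord_qlin qcoord0.
  have := congr1 (fun A : 'M[rat]_(1,4) => A 0 k) rM0; rewrite !mxE => rMk0.
  by rewrite -[RHS]rMk0; apply: eq_bigr => l _; rewrite /M !mxE.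
exists (fun k j => invmx M k j); split => k j.
- have := congr1 (fun A : 'M[rat]_4 => A k j) (mulVmx M_unit); rewrite !mxE => NMkj.
  by rewrite -[RHS]NMkj; apply: eq_bigr => l _; rewrite /M !mxE.
- have := congr1 (fun A : 'M[rat]_4 => A k j) (mulmxV M_unit); rewrite !mxE => MNkj.
  by rewrite -[RHS]MNkj; apply: eq_bigr => l _; rewrite /M !mxE.
Qed.

Lemma sum_mul_delta (V : pzSemiRingType) (I : finType) (c : I -> V) j :
  \sum_i c i * (i == j)%:R = c j.
Proof. by rewrite (bigD1 j) //= eqxx mulr1 big1 ?addr0 // => i /negPf ->; rewrite mulr0. Qed.

Section LatticeCoord.
Variables (e : 'I_4 -> quat rat) (N : 'I_4 -> 'I_4 -> rat).
Hypothesis NM : forall k j, \sum_i N k i * qcoord (e i) j = (k == j)%:R.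
Hypothesis MN : forall i j, \sum_k qcoord (e i) k * N k j = (i == j)%:R.

Definition lcoord (F : fieldType) (x : quat F) (j : 'I_4) : F :=
  \sum_k qcoord x k * ratr (N k j).

Variables (F : fieldType) (F0 : [pchar F] =i pred0).
Let ratrE := ratr_pchar0E F0.
Local Notation eF := (fun i => @qmap rat F ratr (e i)).

Lemma lcoord_qlin (c : 'I_4 -> F) j : lcoord (qlin c eF) j = c j.
Proof.
rewrite /lcoord; under eq_bigr => k _ do rewrite qcoord_qlin big_distrl /=.
rewrite exchange_big /= -[RHS](sum_mul_delta c j); apply: eq_bigr => i _.
rewrite -(rmorph_nat (ratr_pchar0 F0)) -(MN i j) rmorph_sum big_distrr /=.
by apply: eq_bigr => k _; rewrite qcoord_map !ratrE rmorphM mulrA.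
Qed.

Lemma qlin_lcoord (x : quat F) : qlin (lcoord x) eF = x.
Proof.
apply: qcoord_inj => k; rewrite qcoord_qlin /lcoord.
under eq_bigr => i _ do rewrite big_distrl /=.
rewrite exchange_big /= -[RHS](sum_mul_delta (qcoord x) k); apply: eq_bigr => l _.
rewrite -(rmorph_nat (ratr_pchar0 F0)) -(NM l k) rmorph_sum big_distrr /=.
by apply: eq_bigr => i _; rewrite qcoord_map !ratrE rmorphM mulrA.
Qed.

Lemma lat_lcoord (S : F -> Prop) (x : quat F) : lat S eF x <-> forall i, S (lcoord x i).
Proof.
split => [[c [Sc ->]] i|Sx]; first by rewrite lcoord_qlin.
by exists (lcoord x); rewrite qlin_lcoord.
Qed.

Lemma lcoord_add (x y : quat F) j : lcoord (qadd x y) j = lcoord x j + lcoord y j.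
Proof. by rewrite /lcoord -big_split /=; apply: eq_bigr => k _; rewrite qcoord_add mulrDl. Qed.
Lemma lcoord_scale c (x : quat F) j : lcoord (qscale c x) j = c * lcoord x j.
Proof. by rewrite /lcoord big_distrr /=; apply: eq_bigr => k _; rewrite qcoord_scale mulrA. Qed.
Lemma lcoord_map (x : quat rat) j : lcoord (qmap ratr x) j = ratr (lcoord x j) :> F.
Proof.
rewrite /lcoord ratrE rmorph_sum /=; apply: eq_bigr => k _.
by rewrite qcoord_map ratrQ !ratrE rmorphM.
Qed.
End LatticeCoord.

Lemma isZP (q : rat) : isZ q <-> denq q = 1.
Proof. by split => [/ratArchimedean.intrP/eqP|/eqP/ratArchimedean.intrP]. Qed.

Lemma isZ_int (z : int) : isZ z%:~R.
Proof. by exists z. Qed.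
Lemma isZ0 : isZ 0. Proof. by exists 0. Qed.
Lemma isZ1 : isZ 1. Proof. by exists 1. Qed.

Lemma isZ_prod_denq_mul (I : finType) (w : I -> rat) i : isZ ((\prod_j denq (w j))%:~R * w i).
Proof.
rewrite (bigD1 i) //= intrM mulrAC [_ * w i]mulrC -numqE -intrM; exact: isZ_int.
Qed.

Lemma denq_prime_dvd (q : rat) : denq q != 1 -> exists2 p, prime p & (p %| `|denq q|)%N.
Proof.
move=> q_frac; exists (pdiv `|denq q|); last exact: pdiv_dvd.
by apply: pdiv_prime; have := denq_gt0 q; case: (denq q) q_frac => [[|[|n]]|n].
Qed.

Section PadicField.
Variables (R : realType) (p : nat) (F : fieldType) (abs : F -> R).
Hypotheses (p_prime : prime p) (F_Qp : is_Qp p abs).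
Local Notation Zp := (Zp_int abs).

Lemma abs_ge0 x : 0 <= abs x.
Proof. by case: F_Qp. Qed.
Lemma abs_eq0 x : abs x = 0 <-> x = 0.
Proof. by case: F_Qp => _ []. Qed.
Lemma absM x y : abs (x * y) = abs x * abs y.
Proof. by case: F_Qp => _ [_ []]. Qed.
Lemma abs_ultra x y : abs (x + y) <= Num.max (abs x) (abs y).
Proof. by case: F_Qp => _ [_ [_ []]]. Qed.
Lemma abs_ratr q : q != 0 -> abs (ratr q) = padic_abs_rat R p q.
Proof. by case: F_Qp => _ [_ [_ [_ [abs_rat _]]]]; apply: abs_rat. Qed.
Lemma abs_ratr_dense x eps : 0 < eps -> exists q : rat, abs (x - ratr q) < eps.
Proof. by case: F_Qp => _ [_ [_ [_ [_ [dense _]]]]]; apply: dense. Qed.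

Lemma abs0 : abs 0 = 0.
Proof. exact/abs_eq0. Qed.
Lemma abs1 : abs 1 = 1.
Proof.
have abs1_neq0 : abs 1 != 0 by apply/eqP => /abs_eq0/eqP; rewrite oner_eq0.
by apply: (mulfI abs1_neq0); rewrite -absM !mulr1.
Qed.
Lemma absN x : abs (- x) = abs x.
Proof.
suff absN1 : abs (-1) = 1 by rewrite -mulN1r absM absN1 mul1r.
have : abs (-1) ^+ 2 == 1 :> R by rewrite expr2 -absM mulrNN mulr1 abs1.
rewrite sqrf_eq1 => /orP[/eqP // | /eqP absN1].
by have := abs_ge0 (-1); rewrite absN1 oppr_ge0 ler10.
Qed.

Lemma ZpD x y : Zp x -> Zp y -> Zp (x + y).
Proof. by move=> Zx Zy; apply: le_trans (abs_ultra x y) _; rewrite ge_max Zx Zy. Qed.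
Lemma ZpM x y : Zp x -> Zp y -> Zp (x * y).
Proof. by rewrite /Zp_int absM => Zx Zy; rewrite -[1](mulr1 1) ler_pM ?abs_ge0. Qed.
Lemma ZpB x y : Zp x -> Zp y -> Zp (x - y).
Proof. by move=> Zx Zy; apply: ZpD => //; rewrite /Zp_int absN. Qed.
Lemma Zp0 : Zp 0.
Proof. by rewrite /Zp_int abs0. Qed.
Lemma Zp_sum (I : finType) (c : I -> F) : (forall i, Zp (c i)) -> Zp (\sum_i c i).
Proof. by move=> Zc; elim/big_ind: _ => //; [exact: Zp0 | exact: ZpD]. Qed.

Lemma padic_abs_rat_gt0 q : 0 < padic_abs_rat R p q.
Proof. by apply: exprz_gt0; rewrite ltr0n prime_gt0. Qed.

Lemma Qp_pchar0 : [pchar F] =i pred0.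
Proof.
apply/pcharf0P => -[|n]; rewrite ?eqxx //; apply/negbTE/eqP => n1_0.
have := padic_abs_rat_gt0 n.+1%:R; rewrite -abs_ratr ?pnatr_eq0 //.
by rewrite ratr_nat n1_0 abs0 ltxx.
Qed.

Lemma Zp_ratr q : Zp (ratr q) <-> ~~ (p %| `|denq q|)%N.
Proof.
have [->|q0] := eqVneq q 0.
  by rewrite (ratr_pchar0E Qp_pchar0) rmorph0; split => _; [rewrite Euclid_dvd1 | exact: Zp0].
rewrite /Zp_int abs_ratr // /padic_abs_rat -(expr0z (p%:R : R)).
rewrite ler_eXz2l ?ltr1n ?prime_gt1 // subr_le0 lez_nat.
have logn0 n : ~~ (p %| n)%N -> logn p n = 0%N by move=> ndvd; rewrite logn_coprime ?prime_coprime.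
have [pden|npden] := boolP (p %| `|denq q|)%N; last by split => // _; rewrite logn0.
split=> // le_den_num; exfalso.
have npnum : ~~ (p %| `|numq q|)%N.
  apply/negP => pnum; move: (coprime_num_den q) => /(coprime_dvdl pnum).
  by rewrite prime_coprime // pden.
by move: le_den_num; rewrite (logn0 _ npnum) leqNgt logn_gt0 mem_primes p_prime pden absz_gt0 denq_neq0.
Qed.

Lemma Zp_ratr_isZ q : isZ q -> Zp (ratr q).
Proof. by move=> /isZP q_int; apply/Zp_ratr; rewrite q_int Euclid_dvd1. Qed.
End PadicField.

(* For c1, c2 the coordinates of iota(1) and iota(omega) this is the optimality
   iota(E) /\ O = iota(o_E); see opt_emb_optimal_pair. *)
Definition optimal_pair (F : fieldType) (S : F -> Prop) (I : Type) (c1 c2 : I -> F) : Prop :=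
  forall m n, (forall i, S (m * c1 i + n * c2 i)) <-> (S m /\ S n).

Section OptimalPairQp.
Variables (R : realType) (p : nat) (F : fieldType) (abs : F -> R).
Hypotheses (p_prime : prime p) (F_Qp : is_Qp p abs).
Local Notation Zp := (Zp_int abs).
Let ratrE := ratr_pchar0E (Qp_pchar0 p_prime F_Qp).

Lemma abs_ratr_unit (s : int) : s != 0 -> ~~ (p %| `|s|)%N -> abs (ratr s%:~R) = 1.
Proof.
move=> s0 ps; rewrite (abs_ratr F_Qp) ?intr_eq0 // /padic_abs_rat numq_int denq_int logn1.
by rewrite logn_coprime ?prime_coprime // subrr expr0z.
Qed.

Lemma optimal_pair_ratr (I : finType) (al be : I -> rat) : optimal_pair isZ al be ->
  optimal_pair Zp (fun i => ratr (al i)) (fun i => ratr (be i)).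
Proof.
move=> opt m n; have Zal i : isZ (al i).
  by have := (opt 1 0).2 (conj isZ1 isZ0) i; rewrite mul1r mul0r addr0.
have Zbe i : isZ (be i).
  by have := (opt 0 1).2 (conj isZ0 isZ1) i; rewrite mul1r mul0r add0r.
split => [Zmn|[Zm Zn] i].
  2: by apply: (ZpD F_Qp); apply: (ZpM F_Qp) => //; exact: (Zp_ratr_isZ p_prime F_Qp).
(* Approximate m, n by rationals m', n'; the coordinates of m' al + n' be have denominators
   prime to p, and clearing them reduces to optimality over Z. *)
have [m' mm'] := abs_ratr_dense F_Qp m ltr01.
have [n' nn'] := abs_ratr_dense F_Qp n ltr01.
pose w i := m' * al i + n' * be i.
have Zw i : Zp (ratr (w i)).
  have -> : ratr (w i) = (m * ratr (al i) + n * ratr (be i))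
      - (m - ratr m') * ratr (al i) - (n - ratr n') * ratr (be i).
    by rewrite /w !ratrE rmorphD !rmorphM; ring.
  apply: (ZpB F_Qp); first apply: (ZpB F_Qp); first exact: Zmn.
  + by apply: (ZpM F_Qp); [exact: ltW | exact: (Zp_ratr_isZ p_prime F_Qp)].
  + by apply: (ZpM F_Qp); [exact: ltW | exact: (Zp_ratr_isZ p_prime F_Qp)].
pose s := \prod_i denq (w i).
have s0 : s != 0 by rewrite prodf_seq_neq0; apply/allP => i _; rewrite denq_neq0.
have ps : ~~ (p %| `|s|)%N.
  rewrite /s (big_morph absz abszM (erefl 1%N : absz 1 = 1%N)) Euclid_dvd_prod // big_has.
  by apply/hasP => -[k _]; apply/negP/(Zp_ratr p_prime F_Qp).
have [Zsm Zsn] : isZ (s%:~R * m') /\ isZ (s%:~R * n').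
  apply/opt => i; rewrite -!mulrA -mulrDr; exact: isZ_prod_denq_mul.
have Zp_unscale q : isZ (s%:~R * q) -> Zp (ratr q).
  move/(Zp_ratr_isZ p_prime F_Qp); rewrite /Zp_int ratrE rmorphM -!ratrE (absM F_Qp).
  by rewrite abs_ratr_unit // mul1r.
rewrite -[m](subrK (ratr m')) -[n](subrK (ratr n')).
by split; apply: (ZpD F_Qp); [exact: ltW | exact: Zp_unscale | exact: ltW | exact: Zp_unscale].
Qed.
End OptimalPairQp.

Section OptimalPairLocalGlobal.
Variables (R : realType) (Qp : nat -> fieldType) (absp : forall p : nat, Qp p -> R).
Arguments absp : clear implicits.
Hypothesis Qp_Qp : forall p : nat, prime p -> is_Qp p (absp p).

Lemma isZ_local q : isZ q <-> forall p, prime p -> Zp_int (absp p) (ratr q).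
Proof.
split => [Zq p p_prime|Zpq]; first exact: (Zp_ratr_isZ p_prime (Qp_Qp p_prime)).
apply/isZP/eqP/negP => /negP/denq_prime_dvd [p p_prime pden].
by have /(Zp_ratr p_prime (Qp_Qp p_prime)) := Zpq p p_prime; rewrite pden.
Qed.

Lemma optimal_pair_local (I : Type) (al be : I -> rat) :
  (forall p, prime p ->
     optimal_pair (Zp_int (absp p)) (fun i => ratr (al i)) (fun i => ratr (be i))) ->
  optimal_pair isZ al be.
Proof.
move=> opt m n.
have ratr_comb p : prime p -> forall i,
    ratr (m * al i + n * be i) = ratr m * ratr (al i) + ratr n * ratr (be i) :> Qp p.
  by move=> p_prime i; rewrite !(ratr_pchar0E (Qp_pchar0 p_prime (Qp_Qp p_prime))) rmorphD !rmorphM.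
split => [Zcomb|[/isZ_local Zm /isZ_local Zn] i]; last first.
  apply/isZ_local => p p_prime; rewrite ratr_comb //.
  exact: ((opt p p_prime _ _).2 (conj (Zm p p_prime) (Zn p p_prime))).
suff Zmn p : prime p -> Zp_int (absp p) (ratr m) /\ Zp_int (absp p) (ratr n).
  by split; apply/isZ_local => p /Zmn [].
move=> p_prime; apply/(opt p p_prime) => i; rewrite -ratr_comb //.
by move/isZ_local: (Zcomb i); apply.
Qed.
End OptimalPairLocalGlobal.

Section QLin.
Variable F : fieldType.

Lemma qlin_add (c c' : 'I_4 -> F) e : qadd (qlin c e) (qlin c' e) = qlin (fun i => c i + c' i) e.
Proof. by apply: quat_ext; rewrite /qlin /=; ring. Qed.
Lemma qlin_scale k (c : 'I_4 -> F) e : qscale k (qlin c e) = qlin (fun i => k * c i) e.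
Proof. by apply: quat_ext; rewrite /qlin /=; ring. Qed.

Lemma lat_basis (S : F -> Prop) (e : 'I_4 -> quat F) i : S 0 -> S 1 -> lat S e (e i).
Proof.
move=> S0 S1; exists (fun j => if j == i then 1 else 0); split => [j|]; first by case: ifP.
by apply: quat_ext; rewrite /qlin /=; elim/ord4_ind: i; rewrite /= !mul0r !mul1r ?add0r ?addr0.
Qed.
End QLin.

Section OrderLattice.
Variables (e : 'I_4 -> quat rat) (a b : rat).
Hypothesis e_mul : forall i j, lat isZ e (qmul a b (e i) (e j)).
Variables (F : fieldType) (F0 : [pchar F] =i pred0) (S : F -> Prop).
Hypotheses (SD : forall x y, S x -> S y -> S (x + y)) (SM : forall x y, S x -> S y -> S (x * y)).
Hypothesis S_isZ : forall q : rat, isZ q -> S (ratr q).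
Local Notation eF := (fun i => @qmap rat F ratr (e i)).
Local Notation L := (lat S eF).
Local Notation mul := (qmul a b).
Local Notation inv := (qinv a b).

Lemma lat_add x y : L x -> L y -> L (qadd x y).
Proof.
move=> [c [Sc ->]] [c' [Sc' ->]]; rewrite qlin_add.
by exists (fun i => c i + c' i); split => // i; exact: SD.
Qed.
Lemma lat_scale k x : S k -> L x -> L (qscale k x).
Proof.
by move=> Sk [c [Sc ->]]; rewrite qlin_scale; exists (fun i => k * c i); split => // i; exact: SM.
Qed.
Lemma lat_map x : lat isZ e x -> L (qmap ratr x).
Proof.
by move=> [c [Zc ->]]; rewrite (qmap_qlin F0); eexists; split; [move=> i; exact: S_isZ |].
Qed.

Lemma lat_mul x y : L x -> L y -> L (mul x y).
Proof.
move=> [c [Sc ->]] [c' [Sc' ->]].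
have L_e_mul i : L (mul (eF i) (qlin c' eF)).
  rewrite /qlin !qmulDr !qmulZr.
  by do !apply: lat_add; apply: lat_scale => //; rewrite -(qmap_mul F0); apply: lat_map.
by rewrite /qlin !qmulDl !qmulZl; do !apply: lat_add; apply: lat_scale.
Qed.

Lemma lat_conj k y : L k -> L (inv k) -> qnrd a b k != 0 ->
  L y <-> L (mul (mul k y) (inv k)).
Proof.
move=> Lk Lk' k0; split => Ly; first by do !apply: lat_mul.
have -> : y = mul (mul (inv k) (mul (mul k y) (inv k))) k.
  by rewrite -!qmulA qmulVq // qmul1q qmulA qmulVq // qmulq1.
by apply: lat_mul => //; apply: lat_mul.
Qed.

Lemma opt_emb_gact_unit d k (iota : F * F -> quat F) : L k -> L (inv k) -> qnrd a b k != 0 ->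
  opt_emb a b d S eF iota -> opt_emb a b d S eF (gact a b k iota).
Proof.
move=> Lk Lk' k0 [iota_emb iota_opt]; split; first exact: is_emb_gact.
by move=> x; rewrite -iota_opt; symmetry; apply: lat_conj.
Qed.
End OrderLattice.

Section OptimalEmbedding.
Variables (e : 'I_4 -> quat rat) (N : 'I_4 -> 'I_4 -> rat).
Hypothesis NM : forall k j, \sum_i N k i * qcoord (e i) j = (k == j)%:R.
Hypothesis MN : forall i j, \sum_k qcoord (e i) k * N k j = (i == j)%:R.
Variables (F : fieldType) (F0 : [pchar F] =i pred0) (d : int).
Local Notation eF := (fun i => @qmap rat F ratr (e i)).
Local Notation w := (omega F d).

Lemma omega2_neq0 : w.2 != 0.
Proof.
rewrite /omega; case: ifP => _ /=; last exact: oner_neq0.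
by rewrite ratr_pchar0_eq0 // mul1r invr_eq0 pnatr_eq0.
Qed.

Definition oE_coordw (x : F * F) := x.2 / w.2.
Definition oE_coord1 (x : F * F) := x.1 - oE_coordw x * w.1.

Lemma oE_coordE x : x = eadd (oE_coord1 x, 0) (escale (oE_coordw x) w).
Proof.
case: x => x1 x2; rewrite /oE_coord1 /oE_coordw /eadd /escale /=.
by rewrite add0r mulfVK ?omega2_neq0 ?subrK.
Qed.
Lemma oE_coord_comb m n : oE_coordw (eadd (m, 0) (escale n w)) = n /\
  oE_coord1 (eadd (m, 0) (escale n w)) = m.
Proof.
by rewrite /oE_coord1 /oE_coordw /eadd /escale /= add0r mulfK ?omega2_neq0 // addrK.
Qed.

Lemma oE_coord (S : F -> Prop) x : oE d S x <-> S (oE_coord1 x) /\ S (oE_coordw x).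
Proof.
split => [[m [n [Sm [Sn ->]]]]|[S1 Sw]]; first by have [-> ->] := oE_coord_comb m n.
by exists (oE_coord1 x), (oE_coordw x); rewrite -oE_coordE.
Qed.

Lemma opt_emb_optimal_pair (S : F -> Prop) (iota : F * F -> quat F) :
  (forall x y, iota (eadd x y) = qadd (iota x) (iota y)) ->
  (forall c x, iota (escale c x) = qscale c (iota x)) ->
  (forall x, lat S eF (iota x) <-> oE d S x) <->
  optimal_pair S (lcoord N (iota (1, 0))) (lcoord N (iota w)).
Proof.
move=> iotaD iotaZ.
have lcoord_iota x j : lcoord N (iota x) j =
    oE_coord1 x * lcoord N (iota (1, 0)) j + oE_coordw x * lcoord N (iota w) j.
  by rewrite -!lcoord_scale -lcoord_add -!iotaZ -iotaD /escale /= mulr1 mulr0 -oE_coordE.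
split => [iota_opt m n|opt x].
- have [cw c1] := oE_coord_comb m n.
  have := iota_opt (eadd (m, 0) (escale n w)); rewrite oE_coord c1 cw (lat_lcoord NM MN F0) => <-.
  by split => Siota j; move: (Siota j); rewrite (lcoord_iota (eadd _ _)) c1 cw.
- rewrite (lat_lcoord NM MN F0) oE_coord -opt.
  by split => Siota j; move: (Siota j); rewrite (lcoord_iota x).
Qed.
End OptimalEmbedding.

Section DefiniteQuaternions.
Variables (a b : rat).
Hypotheses (a_lt0 : a < 0) (b_lt0 : b < 0).
Local Notation mul := (qmul a b).
Local Notation inv := (qinv a b).
Local Notation nrd := (qnrd a b).
Local Notation one := (qone rat).

Lemma qnrd_neq0 (x : quat rat) : x <> qzero rat -> nrd x != 0.
Proof.
case: x => x0 x1 x2 x3 x_nz; apply/eqP; rewrite /qnrd /= !ratrQ => nrd0; apply: x_nz.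
have ab_gt0 : 0 < a * b by rewrite nmulr_rgt0.
have t0 : 0 <= x0 ^+ 2 by rewrite sqr_ge0.
have t1 : 0 <= x1 ^+ 2 by rewrite sqr_ge0.
have t2 : 0 <= x2 ^+ 2 by rewrite sqr_ge0.
have t3 : 0 <= x3 ^+ 2 by rewrite sqr_ge0.
have t1' : 0 <= - a * x1 ^+ 2 by rewrite mulr_ge0 // oppr_ge0 ltW.
have t2' : 0 <= - b * x2 ^+ 2 by rewrite mulr_ge0 // oppr_ge0 ltW.
have t3' : 0 <= a * b * x3 ^+ 2 by rewrite mulr_ge0 // ltW.
have sq0 (c y : rat) : c != 0 -> c * y ^+ 2 = 0 -> y = 0.
  by move=> c0 /eqP; rewrite mulf_eq0 (negPf c0) sqrf_eq0 => /eqP.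
have -> : x0 = 0 by apply: (sq0 1); rewrite ?oner_eq0 // mul1r; lra.
have -> : x1 = 0 by apply: (sq0 (- a)); rewrite ?oppr_eq0 ?ltr0_neq0 //; lra.
have -> : x2 = 0 by apply: (sq0 (- b)); rewrite ?oppr_eq0 ?ltr0_neq0 //; lra.
have -> : x3 = 0 by apply: (sq0 (a * b)); rewrite ?gt_eqF //; lra.
by [].
Qed.

Variables (d : int) (io : rat * rat -> quat rat).
Hypothesis io_emb : is_emb a b d io.
Local Notation u := (io (0, 1)).

Lemma io_one : io (1, 0) = one.
Proof. by case: io_emb => _ [_ [_ []]]. Qed.
Lemma io_inj : injective io.
Proof. by case: io_emb => _ [_ [_ []]]. Qed.
Lemma io0 : io (0, 0) = qzero rat.
Proof.
have [_ [ioZ _]] := io_emb.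
by rewrite -(qscale0 (io (1, 0))) -ioZ /escale /= mul0r.
Qed.
Lemma io_nz (x : rat * rat) : x != (0, 0) -> io x <> qzero rat.
Proof. by move=> x0; rewrite -io0 => /io_inj x_0; rewrite x_0 eqxx in x0. Qed.
Lemma io_comm x y : mul (io x) (io y) = mul (io y) (io x).
Proof.
have [_ [_ [ioM _]]] := io_emb; rewrite -!ioM; congr io.
by case: x => x1 x2; case: y => y1 y2; rewrite /emul /=; congr pair; ring.
Qed.

Lemma u_sqr : mul u u = qscale d%:~R one.
Proof.
have [_ [ioZ [ioM _]]] := io_emb.
rewrite -ioM -io_one -ioZ; congr io.
by rewrite /emul /escale /= !mulr0 !mul0r !mulr1 addr0 add0r.
Qed.

Lemma u_nonscalar c : u <> qscale c one.
Proof.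
have [_ [ioZ _]] := io_emb.
by rewrite -io_one -ioZ /escale /= mulr0 mulr1 => /io_inj [].
Qed.

Lemma u_pure : q0 u = 0.
Proof.
have := qmul_sqr a b u; rewrite u_sqr; have := @u_nonscalar.
case: u => u0 u1 u2 u3 /= u_ns u_sqr'.
have [//|u0_neq0] := eqVneq u0 0; exfalso; apply: (u_ns u0).
have two_u0 : 2 * u0 != 0 by rewrite mulf_neq0 // pnatr_eq0.
have imag0 v : 0 = 2 * u0 * v -> v = 0.
  by move/esym/eqP; rewrite mulf_eq0 (negPf two_u0) => /eqP.
move: (congr1 (@q1 _) u_sqr') (congr1 (@q2 _) u_sqr') (congr1 (@q3 _) u_sqr') => /=.
rewrite !mulr0 !addr0 => /imag0 -> /imag0 -> /imag0 ->.
by apply: quat_ext; rewrite /= ?mulr1 ?mulr0.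
Qed.

Lemma u_imag_neq0 : [|| q1 u != 0, q2 u != 0 | q3 u != 0].
Proof.
rewrite -[_ || _]negbK !negb_or !negbK; apply/negP => /and3P [/eqP u1 /eqP u2 /eqP u3].
by apply: (@u_nonscalar 0); apply: quat_ext; rewrite /= ?u_pure ?u1 ?u2 ?u3 ?mul0r.
Qed.

Lemma centralizer_u z : mul z u = mul u z -> exists w, z = io w.
Proof.
move=> zu; suff [lam z_eq] : exists lam, z = qadd (qscale (q0 z) one) (qscale lam u).
  by exists (q0 z, lam); rewrite (is_emb_decomp io_emb).
have a0 : a != 0 by rewrite ltr0_neq0.
have b0 : b != 0 by rewrite ltr0_neq0.
move: zu u_pure u_imag_neq0; case: u => u0 u1 u2 u3; case: z => z0 z1 z2 z3 /= zu -> u_im.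
move: (congr1 (@q1 _) zu) (congr1 (@q2 _) zu) (congr1 (@q3 _) zu).
rewrite /qmul /= !ratrQ => e1 e2 e3.
(* Commuting with u forces the imaginary part of z to be proportional to that of u. *)
have c1 : z2 * u3 = z3 * u2.
  apply/eqP; rewrite -subr_eq0; apply/eqP; apply: (mulfI b0); apply: (mulfI (_ : 2 != 0)) => //.
  by rewrite !mulr0; lra.
have c2 : z1 * u3 = z3 * u1.
  apply/eqP; rewrite -subr_eq0; apply/eqP; apply: (mulfI a0); apply: (mulfI (_ : 2 != 0)) => //.
  by rewrite !mulr0; lra.
have c3 : z1 * u2 = z2 * u1 by lra.
case/or3P: u_im => [u1_nz|u2_nz|u3_nz].
- exists (z1 / u1); apply: quat_ext; rewrite /= !mulr0 ?add0r ?mulr1 ?addr0 //.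
  + by rewrite divfK.
  + by rewrite mulrAC c3 mulfK.
  + by rewrite mulrAC c2 mulfK.
- exists (z2 / u2); apply: quat_ext; rewrite /= !mulr0 ?add0r ?mulr1 ?addr0 //.
  + by rewrite mulrAC -c3 mulfK.
  + by rewrite divfK.
  + by rewrite mulrAC c1 mulfK.
- exists (z3 / u3); apply: quat_ext; rewrite /= !mulr0 ?add0r ?mulr1 ?addr0 //.
  + by rewrite mulrAC -c2 mulfK.
  + by rewrite mulrAC -c1 mulfK.
  + by rewrite divfK.
Qed.

Lemma gact_io (x : rat * rat) : x != (0, 0) -> gact a b (io x) io =1 io.
Proof.
by move=> x0 y; rewrite /gact io_comm qmulA qmulqV ?qmulq1 //; exact: qnrd_neq0 (io_nz x0).
Qed.
Lemma gact_inv_io (x : rat * rat) : x != (0, 0) -> gact a b (inv (io x)) io =1 io.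
Proof.
move=> x0 y; transitivity (gact a b (inv (io x)) (gact a b (io x) io) y).
  by rewrite (funext (gact_io x0)).
by rewrite gactK //; exact: qnrd_neq0 (io_nz x0).
Qed.

(* If u + v <> 0 it intertwines u and v; otherwise v = -u, and a commutator of the
   pure quaternion u anticommutes with u. *)
Lemma skolem_noether_u v : mul v v = qscale d%:~R one ->
  exists2 g, g <> qzero rat & mul u g = mul g v.
Proof.
move=> v_sqr; have [uv0|uv_nz] := pselect (qadd u v = qzero rat); last first.
  by exists (qadd u v) => //; rewrite qmulDr qmulDl u_sqr v_sqr qaddC.
have a0 : a != 0 by rewrite ltr0_neq0.
move: u_pure v_sqr uv0 u_imag_neq0.
case: u => u0 u1 u2 u3; case: v => v0 v1 v2 v3 /= -> _ uv0 u_im.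
move: (congr1 (@q0 _) uv0) (congr1 (@q1 _) uv0) (congr1 (@q2 _) uv0) (congr1 (@q3 _) uv0) => /=.
move=> e0 e1 e2 e3; have -> : v0 = 0 by lra.
have -> : v1 = - u1 by lra.
have -> : v2 = - u2 by lra.
have -> : v3 = - u3 by lra.
pose U := Quat 0 u1 u2 u3; pose comm Y := qadd (mul U Y) (qscale (-1) (mul Y U)).
have comm_anti Y : mul U (comm Y) = mul (comm Y) (Quat 0 (- u1) (- u2) (- u3)).
  by case: Y => *; apply: quat_ext; rewrite /qmul /qadd /qscale /= !ratrQ; ring.
have [u23|u23] := boolP ((u2 != 0) || (u3 != 0)).
- exists (comm (Quat 0 1 0 0)); last exact: comm_anti.
  move=> /[dup] /(congr1 (@q2 _)) /= c2 /(congr1 (@q3 _)) /= c3; rewrite ?ratrQ in c2 c3.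
  have u2_0 : u2 = 0 by lra.
  have /eqP : a * u3 = 0 by lra.
  by rewrite mulf_eq0 (negPf a0) => /eqP u3_0; move: u23; rewrite u2_0 u3_0 eqxx.
- have u1_nz : u1 != 0 by case/or3P: u_im => // u_im; rewrite u_im ?orbT in u23.
  exists (comm (Quat 0 0 1 0)); last exact: comm_anti.
  by move=> /(congr1 (@q3 _)) /= c3; move/eqP: u1_nz; apply; lra.
Qed.

Lemma gact_inv_intertwiner g (iota : rat * rat -> quat rat) : nrd g != 0 ->
  is_emb a b d iota -> mul u g = mul g (iota (0, 1)) -> gact a b (inv g) io =1 iota.
Proof.
move=> g0 iota_emb ug x.
rewrite /gact qinvK // (is_emb_decomp io_emb) (is_emb_decomp iota_emb x).
have mulZm c y z w : mul (mul y (qscale c z)) w = qscale c (mul (mul y z) w).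
  by rewrite qmulZr qmulZl.
rewrite qmulDr qmulDl !mulZm qmulq1 qmulVq //.
by rewrite qmulA ug -qmulA qmulVq // qmul1q.
Qed.
End DefiniteQuaternions.

Lemma emb_ext_is_emb (F : fieldType) (F0 : [pchar F] =i pred0) a b d
    (io : rat * rat -> quat rat) :
  is_emb a b d io -> is_emb a b d (emb_ext (F := F) io).
Proof.
move=> io_emb; have ratrE := ratr_pchar0E F0.
set w1 := (ratr (q1 (io (0, 1))) : F); set w2 := (ratr (q2 (io (0, 1))) : F).
set w3 := (ratr (q3 (io (0, 1))) : F).
have u_map : qmap ratr (io (0, 1)) = Quat 0 w1 w2 w3.
  by rewrite /qmap (u_pure io_emb) ratrE rmorph0.
have d_norm : (d%:~R : F) = ratr a * w1 * w1 + ratr b * w2 * w2 - ratr a * ratr b * w3 * w3.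
  have := congr1 (@qmap rat F ratr) (u_sqr io_emb).
  rewrite (qmap_mul F0) (qmap_scale F0) (qmap_one F0) u_map ratrE rmorph_int.
  by move/(congr1 (@q0 _)); rewrite /qmul /qscale /qone /= mulr1 => <-; ring.
have w_neq0 : [|| w1 != 0, w2 != 0 | w3 != 0].
  by rewrite !ratr_pchar0_eq0 //; exact: u_imag_neq0 io_emb.
rewrite /emb_ext u_map; split; [|split; [|split; [|split]]].
- by move=> x y; apply: quat_ext; rewrite /eadd /=; ring.
- by move=> c x; apply: quat_ext; rewrite /escale /=; ring.
- move=> [x1 x2] [y1 y2]; rewrite /emul /=; clearbody w1 w2 w3.
  by apply: quat_ext; rewrite /qmul /qadd /qscale /qone /= ?d_norm; ring.
- by apply: quat_ext; rewrite /=; ring.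
- move=> [x1 x2] [y1 y2] /[dup] /(congr1 (@q0 _)) /= + xy.
  rewrite !mulr0 !mulr1 !addr0 => ->; congr pair.
  move: (congr1 (@q1 _) xy) (congr1 (@q2 _) xy) (congr1 (@q3 _) xy) => /=.
  rewrite !mulr0 !add0r => e1 e2 e3.
  by case/or3P: w_neq0 => w0; apply: (mulIf w0).
Qed.

Lemma rat_content2 (q1 q2 : rat) : exists (rho : rat) (u1 u2 k1 k2 : int),
  rho = u1%:~R * q1 + u2%:~R * q2 /\ q1 = k1%:~R * rho /\ q2 = k2%:~R * rho.
Proof.
pose n1 := numq q1; pose d1 := denq q1; pose n2 := numq q2; pose d2 := denq q2.
have d1_neq0 : (d1%:~R : rat) != 0 by rewrite intr_eq0 denq_neq0.
have d2_neq0 : (d2%:~R : rat) != 0 by rewrite intr_eq0 denq_neq0.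
have q1E : q1 = n1%:~R / d1%:~R by rewrite divq_num_den.
have q2E : q2 = n2%:~R / d2%:~R by rewrite divq_num_den.
pose z1 := n1 * d2; pose z2 := n2 * d1; pose g := gcdz z1 z2.
have [u1 [u2 bezout]] := Bezoutz z1 z2.
exists (g%:~R / (d1 * d2)%:~R), u1, u2, (z1 %/ g)%Z, (z2 %/ g)%Z.
have gE : (g%:~R : rat) = u1%:~R * (n1 * d2)%:~R + u2%:~R * (n2 * d1)%:~R.
  by rewrite /g -bezout rmorphD !rmorphM.
split; [|split].
- by rewrite gE q1E q2E !rmorphM /=; field; rewrite d1_neq0 d2_neq0.
- have := divzK (dvdz_gcdl z1 z2); rewrite -/g => z1E.
  by rewrite mulrA -rmorphM z1E /z1 q1E !rmorphM /=; field; rewrite d1_neq0 d2_neq0.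
- have := divzK (dvdz_gcdr z1 z2); rewrite -/g => z2E.
  by rewrite mulrA -rmorphM z2E /z2 q2E !rmorphM /=; field; rewrite d1_neq0 d2_neq0.
Qed.

Lemma rat_content n (r : 'I_n -> rat) : exists rho : rat,
  (exists u : 'I_n -> int, rho = \sum_i (u i)%:~R * r i) /\
  (forall i, exists k : int, r i = k%:~R * rho).
Proof.
elim: n r => [|n IHn] r.
  by exists 0; split => [|[]//]; exists (fun=> 0); rewrite big_ord0.
have [rho' [[u' rho'E] r'_rho']] := IHn (fun i => r (lift ord0 i)).
have [rho [v1 [v2 [l1 [l2 [rhoE [rho'_rho r0_rho]]]]]]] := rat_content2 rho' (r ord0).
exists rho; split.
- exists (fun i => if unlift ord0 i is Some j then v1 * u' j else v2).
  rewrite big_ord_recl unlift_none rhoE rho'E big_distrr /= addrC; congr (_ + _).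
  by apply: eq_bigr => i _; rewrite liftK intrM mulrA.
- move=> i; case: (unliftP ord0 i) => [j ->|->]; last by exists l2.
  by have [k ->] := r'_rho' j; exists (k * l1); rewrite rho'_rho intrM mulrA.
Qed.

Lemma inK_scale (F : fieldType) a b (S : F -> Prop) (e : 'I_4 -> quat F) c x :
  c != 0 -> inK a b S e x -> inK a b S e (qscale c x).
Proof.
move=> c0 [s [s0 [sx_nz [Lsx Lsx']]]]; exists (s / c); rewrite qscaleA mulfVK //.
by rewrite mulf_neq0 ?invr_eq0.
Qed.

Lemma eichler_order_ring a b (e : 'I_4 -> quat rat) : is_eichler a b e ->
  lat isZ e (qone rat) /\
  forall x y, lat isZ e x -> lat isZ e y -> lat isZ e (qmul a b x y).
Proof.
move=> [_ [O1 [O2 [[[_ [O1_1 O1_mul]] _] [[[_ [O2_1 O2_mul]] _] O_eq]]]]].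
split => [|x y /O_eq[O1x O2x] /O_eq[O1y O2y]]; apply/O_eq; split; by [|apply: O1_mul|apply: O2_mul].
Qed.

Section Adelic.
Variables (R : realType) (Qp : nat -> fieldType) (absp : forall p : nat, Qp p -> R).
Arguments absp : clear implicits.
Hypothesis Qp_Qp : forall p : nat, prime p -> is_Qp p (absp p).
Variables (a b : rat).
Hypotheses (a_lt0 : a < 0) (b_lt0 : b < 0).
Variables (e : 'I_4 -> quat rat) (N : 'I_4 -> 'I_4 -> rat).
Hypothesis NM : forall k j, \sum_i N k i * qcoord (e i) j = (k == j)%:R.
Hypothesis MN : forall i j, \sum_k qcoord (e i) k * N k j = (i == j)%:R.
Hypothesis O_one : lat isZ e (qone rat).
Hypothesis O_mul : forall x y, lat isZ e x -> lat isZ e y -> lat isZ e (qmul a b x y).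
Variables (d : int) (io : rat * rat -> quat rat).
Hypothesis io_opt : opt_emb a b d isZ e io.

Local Notation mul := (qmul a b).
Local Notation inv := (qinv a b).
Local Notation nrd := (qnrd a b).
Local Notation Gamma := (inK a b isZ e).
Local Notation Zp p := (Zp_int (absp p)).
Local Notation eF p := (fun i => @qmap rat (Qp p) ratr (e i)).
Local Notation Kp p := (inK a b (Zp p) (eF p)).
Local Notation qmR := (@qmap rat R ratr).
Local Notation qmp p := (@qmap rat (Qp p) ratr).

Let Qp0 p (p_prime : prime p) := Qp_pchar0 p_prime (Qp_Qp p_prime).
Let R0 : [pchar R] =i pred0 := pchar_num R.
Let Q0 : [pchar rat] =i pred0 := pchar_num rat.
Let io_emb : is_emb a b d io := io_opt.1.
Let qnrd_nz (g : quat rat) : g <> qzero rat -> nrd g != 0 := @qnrd_neq0 a b a_lt0 b_lt0 g.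

Definition in_torus t := exists x : rat * rat, x != (0, 0) /\ t = io x.
Definition phi g := gact a b (inv g) io.
Definition rel_B g h := exists t gam, in_torus t /\ Gamma gam /\ projeq (mul (mul t g) gam) h.
Definition emb_equiv (iota1 iota2 : rat * rat -> quat rat) :=
  exists gam, Gamma gam /\ forall x, gact a b gam iota1 x = iota2 x.
Definition in_KA (k : adele R Qp) := k.1 <> qzero R /\ forall p, prime p -> Kp p (k.2 p).
Definition rel_BA (x y : adele R Qp) := exists t (k : adele R Qp), in_torus t /\ in_KA k /\
  projeq (mul (mul (qmR t) x.1) k.1) y.1 /\
  forall p, prime p -> projeq (mul (mul (qmp p t) (x.2 p)) (k.2 p)) (y.2 p).

Lemma e_mul i j : lat isZ e (mul (e i) (e j)).
Proof. by apply: O_mul; apply: lat_basis; first [exact: isZ0 | exact: isZ1]. Qed.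

Lemma eF_rat : (fun i => @qmap rat rat ratr (e i)) = e.
Proof. by apply: funext => i; rewrite qmap_ratrQ. Qed.

Lemma lat_lcoord_rat y : lat isZ e y <-> forall i, isZ (lcoord N y i).
Proof. by rewrite -[in X in lat _ X]eF_rat; exact: lat_lcoord. Qed.

Lemma lcoord_eq0 y : (forall i, lcoord N y i = 0) -> y = qzero rat.
Proof.
move=> y0; rewrite -(qlin_lcoord NM Q0 y) eF_rat.
by apply: quat_ext; rewrite /qlin /= !y0; ring.
Qed.

Lemma Gamma_nz gam : Gamma gam -> gam <> qzero rat.
Proof. by move=> [c [_ [cgam_nz _]]] gam0; apply: cgam_nz; rewrite gam0 qscaler0. Qed.

Lemma Gamma_inv gam : Gamma gam -> Gamma (inv gam).
Proof.
move=> [c [c0 [cgam_nz [Lcgam Lcgam']]]]; exists c^-1; rewrite -qinvZ.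
split; first by rewrite invr_eq0.
rewrite qinvK; last exact: qnrd_nz.
by split; first exact: qnrd_neq0_nz (qnrdV_neq0 (qnrd_nz cgam_nz)).
Qed.

Lemma Gamma_one : Gamma (qone rat).
Proof.
exists 1; rewrite qscale1 qinv1; split; first exact: oner_neq0.
by split => // /(congr1 (@q0 _)) /= /eqP; rewrite oner_eq0.
Qed.

Lemma Gamma_Kp p gam : prime p -> Gamma gam -> Kp p (qmp p gam).
Proof.
move=> p_prime [c [c0 [cgam_nz [Lcgam Lcgam']]]]; have F0 := Qp0 p_prime.
exists (ratr c); rewrite ratr_pchar0_eq0 // -(qmap_scale F0) -(qmap_inv F0).
split => //; split; first exact: qmap_nz.
by split; apply: (lat_map F0 (Zp_ratr_isZ p_prime (Qp_Qp p_prime))).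
Qed.

Lemma rel_B_emb_equiv g h : g <> qzero rat -> h <> qzero rat ->
  rel_B g h -> emb_equiv (phi g) (phi h).
Proof.
move=> /qnrd_nz g0 /qnrd_nz h0 [_ [gam [[x [x0 ->]] [Ggam [c [c0 ->]]]]]].
exists (inv gam); split => [|y]; first exact: Gamma_inv.
rewrite /phi qinvZ gactZ ?invr_eq0 // !qinvM !gactM.
rewrite (funext (gactM a b (inv g) (inv (io x)) io)).
by rewrite (funext (gact_inv_io a_lt0 b_lt0 io_emb x0)).
Qed.

Lemma emb_equiv_rel_B g h : g <> qzero rat -> h <> qzero rat ->
  emb_equiv (phi g) (phi h) -> rel_B g h.
Proof.
move=> /qnrd_nz g0 /qnrd_nz h0 [gam [Ggam gam_phi]].
have gam0 := qnrd_nz (Gamma_nz Ggam).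
pose z := mul (mul h gam) (inv g).
have z0 : nrd z != 0 by rewrite !qnrdM_neq0 ?qnrdV_neq0.
have z_io y : gact a b z io y = io y.
  by rewrite /z !gactM (funext gam_phi) /phi gactVK.
have zu : mul z (io (0, 1)) = mul (io (0, 1)) z.
  by rewrite -[in RHS](z_io (0, 1)) /gact [RHS]qmulA qmulVq // qmulq1.
have [w zE] := centralizer_u a_lt0 b_lt0 io_emb zu.
have w0 : w != (0, 0) by apply: contraTneq z0 => w_0; rewrite zE w_0 (io0 io_emb) qnrd0.
exists z, (inv gam); split; first by exists w.
split; first exact: Gamma_inv.
exists 1; split; first exact: oner_neq0.
by rewrite qscale1 /z (@qmulA _ a b (mul h gam) (inv g) g) qmulVq // qmulq1 qmulA qmulqV // qmulq1.
Qed.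

Lemma opt_emb_phi iota : opt_emb a b d isZ e iota ->
  exists g, (g <> qzero rat /\ opt_emb a b d isZ e (phi g)) /\ emb_equiv (phi g) iota.
Proof.
move=> [iota_emb iota_opt].
have [g g_nz ug] := skolem_noether_u a_lt0 io_emb (u_sqr iota_emb).
have phi_g : phi g = iota.
  exact/funext/(gact_inv_intertwiner io_emb (qnrd_nz g_nz) iota_emb ug).
exists g; rewrite phi_g; split => //.
by exists (qone rat); split => [|x]; [exact: Gamma_one | rewrite gact1].
Qed.

Definition in_B g := g <> qzero rat /\ opt_emb a b d isZ e (phi g).
Definition in_BA (x : adele R Qp) :=
  x.1 <> qzero R /\
  (forall p, prime p -> x.2 p <> qzero (Qp p) /\
     opt_emb a b d (Zp p) (eF p) (gact a b (inv (x.2 p)) (emb_ext io))) /\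
  exists N0 : nat, forall p, prime p -> (N0 < p)%N -> Kp p (x.2 p).

Lemma opt_emb_rat_optimal_pair g : is_emb a b d (phi g) ->
  opt_emb a b d isZ e (phi g) <->
  optimal_pair isZ (lcoord N (phi g (1, 0))) (lcoord N (phi g (omega rat d))).
Proof.
move=> phi_emb; have [phiD [phiZ _]] := phi_emb.
rewrite -(opt_emb_optimal_pair NM MN Q0 d isZ phiD phiZ) eF_rat.
by split => [[]|].
Qed.

Lemma opt_emb_ext_optimal_pair (F : fieldType) (F0 : [pchar F] =i pred0) (S : F -> Prop) g :
  nrd g != 0 ->
  opt_emb a b d S (fun i => qmap ratr (e i)) (gact a b (inv (qmap ratr g)) (emb_ext io)) <->
  optimal_pair S (fun j => ratr (lcoord N (phi g (1, 0)) j))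
                 (fun j => ratr (lcoord N (phi g (omega rat d)) j)).
Proof.
move=> g0; have ext_emb : is_emb a b d (gact a b (inv (qmap ratr g)) (emb_ext (F := F) io)).
  exact: is_emb_gact (qnrdV_neq0 (qmap_nrd_neq0 F0 g0)) (emb_ext_is_emb F0 io_emb).
have [extD [extZ _]] := ext_emb.
have ext_lcoord x : lcoord N (gact a b (inv (qmap ratr g)) (emb_ext io) (ratr x.1, ratr x.2))
    = fun j => ratr (lcoord N (phi g x) j) :> F.
  by apply: funext => j; rewrite (gact_emb_ext_map F0 _ _ io_emb) (lcoord_map _ F0).
rewrite -!ext_lcoord -(omega_map F0) !(ratr_pchar0E F0) rmorph1 rmorph0.
rewrite -(opt_emb_optimal_pair NM MN F0 d S extD extZ).
by split => [[]|].
Qed.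

Lemma opt_emb_local g : in_B g ->
  forall p, prime p -> opt_emb a b d (Zp p) (eF p) (gact a b (inv (qmp p g)) (emb_ext io)).
Proof.
move=> [/qnrd_nz g0 g_opt] p p_prime.
apply/(opt_emb_ext_optimal_pair (Qp0 p_prime) _ g0).
apply: (optimal_pair_ratr p_prime (Qp_Qp p_prime)).
by apply/opt_emb_rat_optimal_pair => //; case: g_opt.
Qed.

Lemma Kp_almost_all g : g <> qzero rat ->
  exists N0 : nat, forall p, prime p -> (N0 < p)%N -> Kp p (qmp p g).
Proof.
move=> g_nz; pose N0 := (\max_i maxn `|denq (lcoord N g i)| `|denq (lcoord N (inv g) i)|)%N.
exists N0 => p p_prime ltN0p; have F0 := Qp0 p_prime.
have Zp_small_den q : (`|denq q| <= N0)%N -> Zp p (ratr q).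
  move=> le_den; apply/(Zp_ratr p_prime (Qp_Qp p_prime)); apply/negP => /dvdn_leq.
  rewrite absz_gt0 denq_neq0 => /(_ isT) le_p_den.
  by move: (leq_trans le_p_den le_den); rewrite leqNgt ltN0p.
exists 1; rewrite qscale1; split; first exact: oner_neq0.
split; first exact: qmap_nz.
rewrite -(qmap_inv F0); split; apply/(lat_lcoord NM MN F0) => i; rewrite (lcoord_map _ F0);
  apply: Zp_small_den; apply: leq_trans (leq_bigmax i); [exact: leq_maxl | exact: leq_maxr].
Qed.

Lemma Kp_global gm : gm <> qzero rat -> (forall p, prime p -> Kp p (qmp p gm)) ->
  exists2 gam, Gamma gam & projeq gam gm.
Proof.
move=> gm_nz gm_K.
(* gm / rho has integral coordinates for the content rho of gm, and rho is an integral
   combination of the coordinates of gm, which makes rho gm^-1 integral at every p. *)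
have [rho [[u rhoE] gm_rho]] := rat_content (lcoord N gm).
have rho0 : rho != 0.
  apply/eqP => rho0; apply: gm_nz; apply: lcoord_eq0 => i.
  by have [k ->] := gm_rho i; rewrite rho0 mulr0.
have rho_inv_int j : isZ (rho * lcoord N (inv gm) j).
  apply/(isZ_local Qp_Qp) => p p_prime; have F0 := Qp0 p_prime; have Qp_p := Qp_Qp p_prime.
  have [s [s0 [_ [Lsgm Lsgm']]]] := gm_K p p_prime.
  move: Lsgm Lsgm'; rewrite qinvZ -(qmap_inv F0) !(lat_lcoord NM MN F0) => Lsgm Lsgm'.
  have -> : ratr (rho * lcoord N (inv gm) j) = \sum_i ratr ((u i)%:~R : rat) *
      ((s * lcoord N (qmp p gm) i) * (s^-1 * lcoord N (qmp p (inv gm)) j)) :> Qp p.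
    rewrite rhoE (ratr_pchar0E F0) rmorphM rmorph_sum big_distrl /=; apply: eq_bigr => i _.
    by rewrite !(lcoord_map _ F0) !(ratr_pchar0E F0) rmorphM /=; field.
  apply: (Zp_sum Qp_p) => i; apply: (ZpM Qp_p); first exact: (Zp_ratr_isZ p_prime Qp_p (isZ_int _)).
  by apply: (ZpM Qp_p); [move: (Lsgm i) | move: (Lsgm' j)]; rewrite lcoord_scale.
exists (qscale rho^-1 gm); last by exists rho; rewrite qscaleA mulfV // qscale1.
exists 1; rewrite qscale1; split; first exact: oner_neq0.
split; first by apply: qscale_nz; rewrite ?invr_eq0.
split; apply/lat_lcoord_rat => i.
- by rewrite lcoord_scale; have [k ->] := gm_rho i; rewrite mulrCA mulVf // mulr1; exact: isZ_int.
- by rewrite qinvZ invrK lcoord_scale; exact: rho_inv_int.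
Qed.

Lemma rel_B_diag g h : rel_B g h -> rel_BA (diag R Qp g) (diag R Qp h).
Proof.
move=> [t [gam [Tt [Ggam [c [c0 hE]]]]]].
exists t, (qmR gam, fun p => qmp p gam); split => //; split.
  by split => [|p p_prime] /=; [exact: (@qmap_nz R R0 gam (Gamma_nz Ggam)) | exact: Gamma_Kp].
split => [|p p_prime]; [have F0 := R0 | have F0 := Qp0 p_prime].
- by exists (ratr c); split; rewrite ?ratr_pchar0_eq0 //= hE (qmap_scale F0) !(qmap_mul F0).
- by exists (ratr c); split; rewrite ?ratr_pchar0_eq0 //= hE (qmap_scale F0) !(qmap_mul F0).
Qed.

Lemma rel_BA_diag g h : g <> qzero rat -> h <> qzero rat ->
  rel_BA (diag R Qp g) (diag R Qp h) -> rel_B g h.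
Proof.
move=> g_nz h_nz [t [k [[x [x0 tE]] [[_ k_K] [_ k_p]]]]].
have tg0 : nrd (mul t g) != 0.
  by apply: qnrdM_neq0; apply: qnrd_nz => //; rewrite tE; exact (io_nz io_emb x0).
pose gm := mul (inv (mul t g)) h.
have gm_nz : gm <> qzero rat.
  by apply: qnrd_neq0_nz; apply: qnrdM_neq0; [exact: qnrdV_neq0 | exact: qnrd_nz].
have [gam Ggam [c [c0 gmE]]] : exists2 gam, Gamma gam & projeq gam gm.
  apply: Kp_global => // p p_prime; have F0 := Qp0 p_prime.
  have [c [c0 /= hE]] := k_p p p_prime.
  have -> : qmp p gm = qscale c (k.2 p).
    rewrite /gm (qmap_mul F0) (qmap_inv F0) (qmap_mul F0) /= hE qmulZr -qmulA.
    by rewrite -(qmap_mul F0) qmulVq ?qmul1q // qmap_nrd_neq0.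
  exact: (inK_scale c0 (k_K p p_prime)).
exists t, gam; split; first by exists x.
split => //; exists c; split => //.
by rewrite -qmulZr -gmE /gm -qmulA qmulqV // qmul1q.
Qed.

Lemma opt_emb_local_unit p g (xp kp : quat (Qp p)) : prime p -> g <> qzero rat ->
  opt_emb a b d (Zp p) (eF p) (gact a b (inv xp) (emb_ext io)) -> Kp p kp ->
  projeq (mul (qmp p g) kp) xp ->
  optimal_pair (Zp p) (fun j => ratr (lcoord N (phi g (1, 0)) j))
                      (fun j => ratr (lcoord N (phi g (omega rat d)) j)).
Proof.
move=> p_prime /qnrd_nz g0 xp_opt [s [s0 [_ [Lskp Lskp']]]] [c [c0 xpE]].
have F0 := Qp0 p_prime; have Qp_p := Qp_Qp p_prime.
have xp0 : nrd xp != 0 by move: (is_emb_gact_nrd xp_opt.1); rewrite qnrdV invr_eq0.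
have kp0 : nrd kp != 0 by apply: contraNneq xp0 => kp_0; rewrite xpE qnrdZ qnrdM kp_0 !mulr0.
have skp0 : nrd (qscale s kp) != 0 by rewrite qnrdZ mulf_neq0 // expf_neq0.
apply/(opt_emb_ext_optimal_pair F0 _ g0).
have -> : gact a b (inv (qmp p g)) (emb_ext io) =
    gact a b (qscale s kp) (gact a b (inv xp) (emb_ext io)).
  apply/funext => y; rewrite -gactM xpE qinvZ qinvM qmulZl qmulZr qscaleA.
  by rewrite -qmulA qmulqV // qmul1q gactZ // mulf_neq0 ?invr_eq0.
exact: (opt_emb_gact_unit e_mul F0 (ZpD Qp_p) (ZpM Qp_p) (Zp_ratr_isZ p_prime Qp_p)).
Qed.

Definition class_number_one := forall x : adele R Qp,
  (x.1 <> qzero R /\ (forall p, prime p -> x.2 p <> qzero (Qp p)) /\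
   exists N : nat, forall p, prime p -> (N < p)%N -> Kp p (x.2 p)) ->
  exists (g : quat rat) (k : adele R Qp),
    g <> qzero rat /\ k.1 <> qzero R /\ (forall p, prime p -> Kp p (k.2 p)) /\
    projeq (mul (qmR g) k.1) x.1 /\ forall p, prime p -> projeq (mul (qmp p g) (k.2 p)) (x.2 p).

Lemma diag_rel_BA_surj : class_number_one ->
  forall x, in_BA x -> exists g, in_B g /\ rel_BA (diag R Qp g) x.
Proof.
move=> G_A_eq_GK x [x1_nz [xB xN]].
have [g [k [g_nz [k1_nz [kK [x1E xpE]]]]]] :=
  G_A_eq_GK x (conj x1_nz (conj (fun p p_prime => (xB p p_prime).1) xN)).
exists g; split.
- split => //; apply/opt_emb_rat_optimal_pair.
    exact: is_emb_gact (qnrdV_neq0 (qnrd_nz g_nz)) io_emb.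
  apply: (optimal_pair_local Qp_Qp) => p p_prime.
  exact: (opt_emb_local_unit p_prime g_nz (xB p p_prime).2 (kK p p_prime) (xpE p p_prime)).
- exists (qone rat), k; split.
    by exists (1, 0); rewrite xpair_eqE oner_eq0 (io_one io_emb).
  split; first by split.
  rewrite /= (qmap_one R0) qmul1q; split => // p p_prime.
  by rewrite (qmap_one (Qp0 p_prime)) qmul1q; exact: xpE.
Qed.
End Adelic.

Unset Implicit Arguments.
Theorem lemma3p3
  (R : realType) (Qp : nat -> fieldType) (absp : forall p : nat, Qp p -> R)
  (HQp : forall p : nat, prime p -> is_Qp p (absp p))
  (a b : rat) (Hdef : a < 0 /\ b < 0)
  (e : 'I_4 -> quat rat) (HO : is_eichler a b e)
  (Hclass1 : forall x : adele R Qp,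
     (x.1 <> qzero R /\ (forall p, prime p -> x.2 p <> qzero (Qp p)) /\
      exists N : nat, forall p, prime p -> (N < p)%N ->
        inK a b (Zp_int (absp p)) (fun i => qmap ratr (e i)) (x.2 p)) ->
     exists (g : quat rat) (k : adele R Qp),
       g <> qzero rat /\ k.1 <> qzero R /\
       (forall p, prime p -> inK a b (Zp_int (absp p)) (fun i => qmap ratr (e i)) (k.2 p)) /\
       projeq (qmul a b (qmap ratr g) k.1) x.1 /\
       forall p, prime p -> projeq (qmul a b (qmap ratr g) (k.2 p)) (x.2 p))
  (d : int) (Hd : imag_quad_disc d)
  (iota0 : rat * rat -> quat rat) (Hiota0 : opt_emb a b d isZ e iota0) :
  let Gamma := inK a b isZ e in
  let inT := fun t : quat rat => exists x : rat * rat, x != (0, 0) /\ t = iota0 x in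
  let inB := fun g : quat rat =>
    g <> qzero rat /\ opt_emb a b d isZ e (gact a b (qinv a b g) iota0) in
  let inBp := fun (p : nat) (g : quat (Qp p)) =>
    g <> qzero (Qp p) /\
    opt_emb a b d (Zp_int (absp p)) (fun i => qmap ratr (e i))
      (gact a b (qinv a b g) (emb_ext (F:=Qp p) iota0)) in
  let Kp := fun (p : nat) => inK a b (Zp_int (absp p)) (fun i => qmap ratr (e i)) in
  let inBA := fun x : adele R Qp =>
    x.1 <> qzero R /\ (forall p, prime p -> inBp p (x.2 p)) /\
    exists N : nat, forall p, prime p -> (N < p)%N -> Kp p (x.2 p) in
  let inKA := fun k : adele R Qp =>
    k.1 <> qzero R /\ forall p, prime p -> Kp p (k.2 p) in
  (* T \ B / Gamma *)
  let relB := fun g h : quat rat =>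
    exists t gam, inT t /\ Gamma gam /\ projeq (qmul a b (qmul a b t g) gam) h in
  (* T \ B_A / K *)
  let relBA := fun x y : adele R Qp =>
    exists t (k : adele R Qp), inT t /\ inKA k /\
      projeq (qmul a b (qmul a b (qmap ratr t) x.1) k.1) y.1 /\
      forall p, prime p -> projeq (qmul a b (qmul a b (qmap ratr t) (x.2 p)) (k.2 p)) (y.2 p) in
  (* iota1 ~ iota2 *)
  let embeq := fun iota1 iota2 : rat * rat -> quat rat =>
    exists gam, Gamma gam /\ forall x, gact a b gam iota1 x = iota2 x in
  let phi := fun g : quat rat => gact a b (qinv a b g) iota0 in
  (* (1) g |-> g^-1 . iota0 induces T\B/Gamma ~= Emb(o_E,O)/~ *)
  ((forall g h, inB g -> inB h -> (relB g h <-> embeq (phi g) (phi h))) /\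
   (forall iota, opt_emb a b d isZ e iota -> exists g, inB g /\ embeq (phi g) iota)) /\
  (* (2) the diagonal map B -> B_A induces T\B/Gamma ~= T\B_A/K *)
  ((forall g, inB g -> inBA (diag R Qp g)) /\
   (forall g h, inB g -> inB h -> (relB g h <-> relBA (diag R Qp g) (diag R Qp h))) /\
   (forall x, inBA x -> exists g, inB g /\ relBA (diag R Qp g) x)).
Proof.
cbv zeta; have [a_lt0 b_lt0] := Hdef.
have [[e_basis _] [O_one O_mul]] := (HO, eichler_order_ring HO).
have [N [NM MN]] := qbasis_dual e_basis.
split; [split|split; [|split]].
- move=> g h [g_nz _] [h_nz _].
  split; [exact: (rel_B_emb_equiv a_lt0 b_lt0 Hiota0 g_nz h_nz)
         | exact: (emb_equiv_rel_B a_lt0 b_lt0 Hiota0 g_nz h_nz)].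
- exact: (opt_emb_phi a_lt0 b_lt0 O_one Hiota0).
- move=> g g_B; split; first exact: (@qmap_nz R (pchar_num R) g g_B.1).
  split; last exact: (Kp_almost_all HQp a b NM MN g_B.1).
  move=> p p_prime; split; first exact: (qmap_nz (Qp_pchar0 p_prime (HQp p p_prime)) g_B.1).
  exact: (opt_emb_local HQp a_lt0 b_lt0 NM MN Hiota0 g_B).
- move=> g h [g_nz _] [h_nz _]; split; first exact: (rel_B_diag HQp).
  exact: (rel_BA_diag HQp a_lt0 b_lt0 NM MN Hiota0 g_nz h_nz).
- exact: (diag_rel_BA_surj HQp a_lt0 b_lt0 NM MN O_mul Hiota0 Hclass1).
Qed.
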